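(* For every integer $N\ge 1$, the total area of all ternary paths of length $3N$ equals $$\sum_{k=0}^{N-1}3^{k+1}\binom{3N-k}{N-1-k}.$$
   Context: A ternary path of length $3N$ is a lattice path $(0,c_0),(1,c_1),\dots,(3N,c_{3N})$ with $c_0=c_{3N}=0$, steps $(1,1)$ or $(1,-2)$, and all $c_j\ge 0$. Its area is $c_0+c_1+\cdots+c_{3N}$. The total area is the sum of the areas over all such paths of length $3N$. *)

From mathcomp Require Import all_boot all_order all_algebra.
Set Implicit Arguments. Unset Strict Implicit. Unset Printing Implicit Defensive.
Import GRing.Theory Num.Theory.

(* A path of length n is encoded by its step sequence s (size n):
   true = step (1,1), false = step (1,-2). *)
Definition step_val (b : bool) : int := if b then 1%R else (- 2%:R)%R.

Definition height (s : seq bool) (j : nat) : int :=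
  (\sum_(b <- take j s) step_val b)%R.

Definition is_ternary_path (s : seq bool) : bool :=
  [forall j : 'I_(size s).+1, (0 <= height s j)%R] && (height s (size s) == 0%R).

Definition area (s : seq bool) : int := (\sum_(j < (size s).+1) height s j)%R.

Definition total_area (n : nat) : int :=
  (\sum_(t : n.-tuple bool | is_ternary_path t) area t)%R.

From mathcomp Require Import all_boot all_order all_algebra.
From mathcomp Require Import ring zify.
Import GRing.Theory Num.Theory.
Local Open Scope ring_scope.

(* Classify the nonnegative prefixes of length n by their final height h and
   let P(n,h) be their number and W(n,h) their total area.  Splitting off the
   last step gives
     P(n+1,h) = P(n,h-1) + P(n,h+2),
     W(n+1,h) = W(n,h-1) + W(n,h+2) + h P(n+1,h).
   Since n = h mod 3 whenever P(n,h) <> 0, write n = 3m + h.  Then P(n,h) is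
   the ballot number C(3m+h+1,m) - 3 C(3m+h,m-1), and W(n,h) has an explicit
   closed form built from binomials and F(m,r) = sum_k 3^k C(3m+r-k, m-k);
   both are checked against the recurrences using only Pascal's rule.  The
   total area is W(3N,0) = 3 F(N-1,3), which is the stated sum. *)

Definition bin3 (m r : nat) : int := ('C(3 * m + r, m))%:R.
Definition bin3_pred (m r : nat) : int := if m is m'.+1 then bin3 m' r else 0.

Fixpoint wsum (m r : nat) : int :=
  if m is m'.+1 then bin3 m r + 3 * wsum m' r.+2 else 1.
Definition wsum_pred (m r : nat) : int := if m is m'.+1 then wsum m' r else 0.

Definition ballot (m r : nat) : int := bin3 m r - 3 * bin3_pred m r.+2.

Definition tri (h : nat) : int := ('C(h.+1, 2))%:R.

Definition area_cf (m h : nat) : int :=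
  3 * h.+1%:R * wsum_pred m h.+3 + 3 * tri h * bin3_pred m h.+3
  + tri h * ballot m h.+1.

Lemma bin30r r : bin3 0 r = 1.
Proof. by rewrite /bin3 bin0. Qed.

Lemma bin3S m r : bin3 m r.+1 = bin3 m r + bin3_pred m r.+3.
Proof.
case: m => [|m]; first by rewrite !bin30r /= addr0.
rewrite /bin3_pred /bin3.
have -> : (3 * m.+1 + r.+1 = (3 * m.+1 + r).+1)%N by lia.
by rewrite binS natrD; congr (_ + _%:R); congr 'C(_, _); lia.
Qed.

Lemma wsumE m r : wsum m r = bin3 m r + 3 * wsum_pred m r.+2.
Proof. by case: m => [|m] /=; rewrite ?bin30r ?mulr0 ?addr0. Qed.

Lemma wsum_diff m r : 3 * wsum m r - 2 * wsum m r.+1 = bin3 m r.+1.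
Proof.
elim: m r => [|m IH] r /=; first by rewrite !bin30r.
by rewrite (bin3S m.+1 r) /= -(IH r.+2); ring.
Qed.

Lemma wsum_pred_diff m r :
  3 * wsum_pred m r - 2 * wsum_pred m r.+1 = bin3_pred m r.+1.
Proof. by case: m => [|m] /=; [rewrite !mulr0 subr0 | exact: wsum_diff]. Qed.

Lemma wsumS m r : wsum m r.+1 = wsum m r + wsum_pred m r.+3.
Proof.
case: m => [|m] /=; first by rewrite addr0.
by rewrite (bin3S m.+1 r) /= -(wsum_diff m r.+2); ring.
Qed.

Lemma wsum_binomial_sum m r :
  wsum m r = (\sum_(k < m.+1) 3 ^ k * 'C(3 * m + r - k, m - k))%N%:R.
Proof.
elim: m r => [|m IH] r; first by rewrite big_ord_recl big_ord0 /= subn0 bin0.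
rewrite /= IH /bin3 -natrM -natrD; congr (_%:R).
rewrite [RHS]big_ord_recl expn0 mul1n !subn0; congr (_ + _).
rewrite big_distrr /=; apply: eq_bigr => i _.
by rewrite expnS mulnA; congr (_ * 'C(_, _)); rewrite /bump /=; lia.
Qed.

Lemma ballotS m r :
  ballot m r.+1 = ballot m r + (if m is m'.+1 then ballot m' r.+3 else 0).
Proof.
case: m => [|m]; rewrite /ballot /=; first by rewrite !bin30r !mulr0.
by rewrite bin3S /= !(bin3S m r.+2); ring.
Qed.

(* From (m+1) C(3m+3, m+1) = (3m+3) C(3m+2, m). *)
Lemma ballot0 m : ballot m.+1 0 = 0.
Proof.
rewrite /ballot /= /bin3 addn0.
have diag := mul_bin_diag (3 * m.+1) m.
rewrite (_ : (3 * m.+1).-1 = 3 * m + 2)%N in diag; last by lia.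
have -> : ('C(3 * m.+1, m.+1) = 3 * 'C(3 * m + 2, m))%N.
  by apply/eqP; rewrite -(eqn_pmul2l (ltn0Sn m)) -diag; apply/eqP; lia.
by rewrite natrM; ring.
Qed.

Lemma ballot1 m : ballot m.+1 1 = ballot m 3.
Proof. by rewrite ballotS ballot0 add0r. Qed.

Lemma triS h : tri h.+1 = tri h + h.+1%:R.
Proof. by rewrite /tri binS bin1 natrD. Qed.

Lemma area_cf0 m : area_cf m.+1 0 = area_cf m 2.
Proof.
rewrite /area_cf /tri /= /ballot /= (wsumE m 3).
by rewrite (_ : 'C(1, 2) = 0)%N // (_ : 'C(3, 2) = 3)%N //; ring.
Qed.

Lemma area_cfS m h :
  area_cf m h.+1 = area_cf m h + (if m is m'.+1 then area_cf m' h.+3 else 0)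
                   + h.+1%:R * ballot m h.+2.
Proof.
case: m => [|m]; rewrite /area_cf /ballot /=; first by rewrite !bin30r !triS; ring.
rewrite (bin3S m.+1 h.+1) /= (wsumS m h.+3) (wsumE m h.+3) (bin3S m h.+3).
by rewrite -(wsum_pred_diff m h.+4.+1) !triS; ring.
Qed.

Fixpoint bseqs (n : nat) : seq (seq bool) :=
  if n is n'.+1 then [seq rcons s b | s <- bseqs n', b <- [:: true; false]]
  else [:: [::]].

Lemma mem_bseqs n s : (s \in bseqs n) = (size s == n).
Proof.
elim: n s => [|n IH] s; first by rewrite /= inE; case: s.
apply/allpairsP/idP => [[[s' b] /= [s'n _ ->]]|].
  by rewrite size_rcons eqSS -IH.
case/lastP: s => [//|s' b]; rewrite size_rcons eqSS -IH => s'n.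
by exists (s', b); rewrite /= s'n; case: b.
Qed.

Lemma uniq_bseqs n : uniq (bseqs n).
Proof.
elim: n => [//|n IH]; apply: allpairs_uniq => // [[s1 b1] [s2 b2]] _ _ /=.
exact: rcons_inj.
Qed.

Lemma sum_tuples_bseqs n (P : pred (seq bool)) (F : seq bool -> int) :
  \sum_(t : n.-tuple bool | P t) F t = \sum_(s <- bseqs n | P s) F s.
Proof.
have -> : \sum_(t : n.-tuple bool | P t) F t =
          \sum_(s <- map val (enum {: n.-tuple bool}) | P s) F s.
  by rewrite big_map big_enum_cond.
apply: perm_big; apply: uniq_perm.
- by rewrite map_inj_uniq ?enum_uniq //; exact: val_inj.
- exact: uniq_bseqs.
move=> s; rewrite mem_bseqs; apply/mapP/idP => [[t _ ->]|sn].
  by rewrite size_tuple.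
by exists (Tuple sn); rewrite ?mem_enum.
Qed.

Lemma sum_bseqsS n (F : seq bool -> int) :
  \sum_(s <- bseqs n.+1) F s =
  \sum_(s <- bseqs n) (F (rcons s true) + F (rcons s false)).
Proof.
rewrite big_allpairs_dep; apply: eq_bigr => s _.
by rewrite !big_cons big_nil /= addr0.
Qed.

Definition nonneg_heights (s : seq bool) : bool :=
  all (fun j => 0 <= height s j) (iota 0 (size s).+1).

Definition last_height (s : seq bool) : int := height s (size s).

Lemma nonneg_heightsE s :
  [forall j : 'I_(size s).+1, 0 <= height s j] = nonneg_heights s.
Proof.
apply/forallP/allP => [nn j|nn j].
  by rewrite mem_iota add0n => ltj; exact: (nn (Ordinal ltj)).
by apply: nn; rewrite mem_iota add0n ltn_ord.
Qed.

Lemma height_rcons s b j : (j <= size s)%N -> height (rcons s b) j = height s j.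
Proof. by move=> le_js; rewrite /height -cats1 takel_cat. Qed.

Lemma last_height_rcons s b : last_height (rcons s b) = last_height s + step_val b.
Proof. by rewrite /last_height /height !take_size big_rcons. Qed.

Lemma last_height_ge0 s : nonneg_heights s -> 0 <= last_height s.
Proof. by move/allP; apply; rewrite mem_iota add0n ltnSn. Qed.

Lemma last_height_le_size s : last_height s <= (size s)%:R.
Proof.
rewrite /last_height /height take_size.
elim: s => [|b s IH]; first by rewrite big_nil.
by rewrite big_cons /= -addn1 natrD addrC lerD //; case: b.
Qed.

Lemma nonneg_heights_rcons s b :
  nonneg_heights (rcons s b) =
  nonneg_heights s && (0 <= last_height s + step_val b).
Proof.
rewrite /nonneg_heights size_rcons -(addn1 (size s).+1) iotaD all_cat.
congr (_ && _); last by rewrite -last_height_rcons /= andbT /last_height size_rcons.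
by apply: eq_in_all => j; rewrite mem_iota add0n ltnS => le_js; rewrite height_rcons.
Qed.

Lemma area_rcons s b : area (rcons s b) = area s + last_height (rcons s b).
Proof.
rewrite /area /last_height size_rcons big_ord_recr /=; congr (_ + _).
by apply: eq_bigr => j _; rewrite height_rcons // -ltnS.
Qed.

Definition ends_at (h : nat) (s : seq bool) : bool :=
  nonneg_heights s && (last_height s == h%:R).

Definition count_ending (n h : nat) : int :=
  \sum_(s <- bseqs n | ends_at h s) 1.
Definition area_ending (n h : nat) : int :=
  \sum_(s <- bseqs n | ends_at h s) area s.

Lemma ends_at_rcons_up h s :
  ends_at h (rcons s true) = if h is h'.+1 then ends_at h' s else false.
Proof.
rewrite /ends_at nonneg_heights_rcons last_height_rcons /step_val.
case: (boolP (nonneg_heights s)) => [/last_height_ge0 ge0|_]; last by case: h.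
by case: h => [|h] /=; apply/idP/idP; lia.
Qed.

Lemma ends_at_rcons_down h s : ends_at h (rcons s false) = ends_at h.+2 s.
Proof.
rewrite /ends_at nonneg_heights_rcons last_height_rcons /step_val.
case: (boolP (nonneg_heights s)) => [/last_height_ge0 ge0|_] /=; last by [].
by apply/idP/idP; lia.
Qed.

Lemma sum_ending_last_step n h (F : seq bool -> int) :
  \sum_(s <- bseqs n.+1 | ends_at h s) F s =
  (if h is h'.+1 then \sum_(s <- bseqs n | ends_at h' s) F (rcons s true) else 0)
  + \sum_(s <- bseqs n | ends_at h.+2 s) F (rcons s false).
Proof.
rewrite big_mkcond sum_bseqsS.
under eq_bigr => s _ do rewrite ends_at_rcons_up ends_at_rcons_down.
rewrite big_split /=; congr (_ + _); last by rewrite -big_mkcond.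
by case: h => [|h]; [rewrite big1 | rewrite -big_mkcond].
Qed.

Lemma sum_ending_too_high n h (F : seq bool -> int) :
  (n < h)%N -> \sum_(s <- bseqs n | ends_at h s) F s = 0.
Proof.
move=> lt_nh; rewrite big_seq_cond big1 // => s /andP [].
rewrite mem_bseqs => /eqP sn /andP [_ /eqP endh].
by have := last_height_le_size s; rewrite endh sn ler_nat; lia.
Qed.

Lemma count_endingS n h :
  count_ending n.+1 h = (if h is h'.+1 then count_ending n h' else 0)
                        + count_ending n h.+2.
Proof. by rewrite /count_ending sum_ending_last_step; case: h. Qed.

Lemma sum_ending_area_rcons n h b :
  \sum_(s <- bseqs n | ends_at h s) area (rcons s b) =
  area_ending n h + (h%:R + step_val b) * count_ending n h.
Proof.
rewrite /area_ending /count_ending big_distrr -big_split /=.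
apply: eq_bigr => s /andP [_ /eqP endh].
by rewrite area_rcons last_height_rcons endh mulr1.
Qed.

Lemma area_endingS n h :
  area_ending n.+1 h = (if h is h'.+1 then area_ending n h' else 0)
                       + area_ending n h.+2 + h%:R * count_ending n.+1 h.
Proof.
rewrite {1}/area_ending sum_ending_last_step count_endingS.
by case: h => [|h]; rewrite !sum_ending_area_rcons /step_val; ring.
Qed.

Lemma ends_at0_nil : ends_at 0 [::].
Proof. by rewrite /ends_at /nonneg_heights /last_height /height /= big_nil. Qed.

Lemma ending_closed_forms m h :
  count_ending (3 * m + h) h = ballot m h.+1 /\
  area_ending (3 * m + h) h = area_cf m h.
Proof.
move n_eq: (3 * m + h)%N => n; elim: n m h n_eq => [|n IH] m h n_eq.
  have [-> ->] : m = 0%N /\ h = 0%N by lia.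
  rewrite /count_ending /area_ending /= !big_cons !big_nil ends_at0_nil.
  rewrite /ballot /area_cf /=.
  rewrite bin30r /area big_ord_recr big_ord0 /= /height big_nil /tri.
  by rewrite (_ : 'C(1, 2) = 0)%N //; split; ring.
case: h n_eq => [|h] n_eq.
  case: m n_eq => [|m] n_eq; first by lia.
  have [cnt ar] := IH m 2%N ltac:(lia).
  by rewrite count_endingS area_endingS cnt ar ballot1 area_cf0; split; ring.
have [cnt ar] := IH m h ltac:(lia).
have [cnt3 ar3] : count_ending n h.+3 = (if m is m'.+1 then ballot m' h.+4 else 0)
               /\ area_ending n h.+3 = (if m is m'.+1 then area_cf m' h.+3 else 0).
  case: m n_eq {cnt ar} => [|m] n_eq; last by apply: IH; lia.
  by rewrite /count_ending /area_ending !sum_ending_too_high //; lia.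
have cntS : count_ending n.+1 h.+1 = ballot m h.+2.
  by rewrite count_endingS cnt cnt3 (ballotS m h.+1).
by split; rewrite // area_endingS cntS ar ar3 area_cfS; ring.
Qed.

Theorem mainTheorem3 (N : nat) (hN : (1 <= N)%N) :
  total_area (3 * N) = (
  ((\sum_(k < N) 3 ^ k.+1 * 'C(3 * N - k, N - 1 - k))%N)%:R)%R.
Proof.
have -> : total_area (3 * N) = area_ending (3 * N) 0.
  rewrite /total_area sum_tuples_bseqs; apply: eq_bigl => s.
  by rewrite /is_ternary_path nonneg_heightsE.
have [_] := ending_closed_forms N 0; rewrite addn0 => ->.
case: N hN => [//|M] _.
rewrite /area_cf /tri /= wsum_binomial_sum (_ : 'C(1, 2) = 0)%N //.
rewrite mulr0 mul0r addr0 mul0r addr0 mulr1 -natrM; congr (_%:R).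
rewrite big_distrr; apply: eq_bigr => i _ /=.
by rewrite expnS mulnA; congr (_ * 'C(_, _)); lia.
Qed.
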